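(* Let $k\ge 2$ and $m$ be positive integers, and let \[ p_m(x) = x^k - m x^{k-1} - x^{k-2} - \dots - x - 1 . \] Then $p_m(x)$ has a unique positive real root $\varrho_m$, and it satisfies $m<\varrho_m<m+1$. Moreover, every complex root $\gamma\neq\varrho_m$ of $p_m(x)$ satisfies $|\gamma|<\varrho_m$.
   Context: For $k=2$ the polynomial is $p_m(x)=x^2-mx-1$. *)

From mathcomp Require Import all_boot all_order all_algebra all_field.
Set Implicit Arguments. Unset Strict Implicit. Unset Printing Implicit Defensive.
Import GRing.Theory Num.Theory.
Local Open Scope ring_scope.

(* p_m(x) = x^k - m x^(k-1) - x^(k-2) - ... - x - 1, over algC
   (complex algebraic numbers; all roots of this integer polynomial lie there). *)
Definition pm (k m : nat) : {poly algC} :=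
  'X^k - m%:R *: 'X^(k.-1) - \sum_(i < k.-1) 'X^i.

From mathcomp Require Import all_boot all_order all_algebra all_field.

(* For x > 0 we have p_m(x) = x^(k-1) * (x - m - x^-1 - ... - x^-(k-1)), and the
   second factor is strictly increasing.  Hence p_m has at most one positive
   root and is positive to the right of it; as p_m(m) < 0 < p_m(m+1), the
   intermediate value theorem in the real algebraic numbers yields the root rho
   in (m, m+1).  For a complex root g the triangle inequality applied to
   g^k = m g^(k-1) + g^(k-2) + ... + 1 gives p_m(|g|) <= 0, so |g| <= rho; if
   |g| = rho, equality in the triangle inequality makes all the terms
   nonnegative reals, so g = g^(k-1) / g^(k-2) = rho. *)

Set Implicit Arguments.
Unset Strict Implicit.
Unset Printing Implicit Defensive.

Import Order.TTheory GRing.Theory Num.Theory.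
Local Open Scope ring_scope.

(* [pm] is fixed over [algC]; the intermediate value theorem is applied to
   the same polynomial over the real closed field [algR]. *)
Definition pm_poly (R : nzRingType) (k m : nat) : {poly R} :=
  'X^k - m%:R *: 'X^(k.-1) - \sum_(i < k.-1) 'X^i.

(* Indexed by [n = k - 2]. *)
Definition pm_val (R : pzRingType) (n m : nat) (x : R) : R :=
  x ^+ n.+2 - m%:R * x ^+ n.+1 - \sum_(i < n.+1) x ^+ i.

Lemma horner_pm_poly (R : comNzRingType) n m (x : R) :
  (pm_poly R n.+2 m).[x] = pm_val n m x.
Proof.
rewrite !hornerE horner_sum; congr (_ - _).
by apply: eq_bigr => i _; rewrite hornerXn.
Qed.

Lemma rmorph_pm_val (R S : comNzRingType) (f : {rmorphism R -> S}) n m x :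
  f (pm_val n m x) = pm_val n m (f x).
Proof.
rewrite !rmorphB rmorphM rmorph_nat !rmorphXn rmorph_sum.
by congr (_ - _); apply: eq_bigr => i _; rewrite rmorphXn.
Qed.

Lemma pm_val_eq0 (R : comPzRingType) n m (x : R) :
  (pm_val n m x == 0) = (x ^+ n.+2 == m%:R * x ^+ n.+1 + \sum_(i < n.+1) x ^+ i).
Proof. by rewrite /pm_val -addrA -opprD subr_eq0. Qed.

Lemma sum_expn_lt (a k : nat) : (1 < a)%N -> (\sum_(i < k) a ^ i < a ^ k)%N.
Proof.
move=> a1; apply: (@leq_ltn_trans (a.-1 * \sum_(i < k) a ^ i)).
  by rewrite leq_pmull //; case: a a1 => [|[|a]].
by rewrite -predn_exp ltn_predL expn_gt0 ltnW.
Qed.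

Section NumField.

Variables (R : numFieldType) (n m : nat).

Definition pm_ratio (x : R) : R :=
  x - m%:R - \sum_(i < n.+1) (x ^+ (n.+1 - i))^-1.

Lemma pm_valE (x : R) : x != 0 -> pm_val n m x = x ^+ n.+1 * pm_ratio x.
Proof.
move=> x0; rewrite /pm_ratio !mulrBr mulr_sumr -exprSr mulrC; congr (_ - _).
apply: eq_bigr => i _; rewrite expfB // invf_div mulrCA divff ?mulr1 //.
by rewrite expf_neq0.
Qed.

Lemma pm_ratio_lt (x y : R) : 0 < x -> x < y -> pm_ratio x < pm_ratio y.
Proof.
move=> x0 xy; have y0 := lt_trans x0 xy.
rewrite /pm_ratio ltr_leB ?ltrD2r //; apply: ler_sum => i _.
by rewrite lef_pV2 ?posrE ?exprn_gt0 // lerXn2r ?nnegrE ?ltW.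
Qed.

Lemma pm_val_gt0_mono (x y : R) :
  0 < x -> x < y -> 0 <= pm_val n m x -> 0 < pm_val n m y.
Proof.
move=> x0 xy; have y0 := lt_trans x0 xy.
rewrite !pm_valE ?gt_eqF // !pmulr_rge0 ?pmulr_rgt0 ?exprn_gt0 //.
by move/le_lt_trans; apply; apply: pm_ratio_lt.
Qed.

Lemma pm_val_pos_root_unique (x y : R) : 0 < x -> 0 < y ->
  pm_val n m x = 0 -> pm_val n m y = 0 -> x = y.
Proof.
move=> x0 y0 ex ey.
have [xy|yx|//] := real_ltgtP (gtr0_real x0) (gtr0_real y0).
- by have := pm_val_gt0_mono x0 xy; rewrite ex ey lexx ltxx => /(_ isT).
- by have := pm_val_gt0_mono y0 yx; rewrite ex ey lexx ltxx => /(_ isT).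
Qed.

Lemma pm_val_nat_lt0 : pm_val n m (m%:R : R) < 0.
Proof.
rewrite /pm_val exprS subrr sub0r oppr_lt0 big_ord_recl expr0.
by rewrite ltr_pwDl ?sumr_ge0 // => i _; rewrite exprn_ge0.
Qed.

Lemma pm_val_natS_gt0 : (0 < m)%N -> 0 < pm_val n m (m.+1%:R : R).
Proof.
move=> m0; rewrite /pm_val [_ ^+ n.+2]exprS -mulrBl -natrB // subSnn mul1r.
rewrite subr_gt0 (eq_bigr _ (fun i _ => esym (natrX _ _ _))).
by rewrite -natr_sum -natrX ltr_nat sum_expn_lt.
Qed.

End NumField.

Lemma pm_root_between n m : (0 < m)%N ->
  exists2 rho : algC, m%:R < rho < m.+1%:R & pm_val n m rho = 0.
Proof.
move=> m0.
have [x /andP[mx xm]] : exists2 x : algR, m%:R <= x <= m.+1%:R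
    & root (pm_poly algR n.+2 m) x.
  apply: poly_ivt; first by rewrite ler_nat.
  by rewrite !horner_pm_poly !ltW ?pm_val_nat_lt0 ?pm_val_natS_gt0.
rewrite rootE horner_pm_poly => /eqP ex.
have mx' : m%:R < x.
  rewrite lt_neqAle mx andbT; apply/eqP => exm.
  by have := pm_val_nat_lt0 algR n m; rewrite exm ex ltxx.
have xm' : x < m.+1%:R.
  rewrite lt_neqAle xm andbT; apply/eqP => exm.
  by have := pm_val_natS_gt0 algR n m0; rewrite -exm ex ltxx.
exists (algRval x); last by rewrite -rmorph_pm_val ex rmorph0.
by rewrite -(rmorph_nat algRval m) -(rmorph_nat algRval m.+1); apply/andP.
Qed.

Lemma pm_val_norm_le0 (R : numDomainType) n m (z : R) :
  pm_val n m z = 0 -> pm_val n m `|z| <= 0.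
Proof.
move/eqP; rewrite pm_val_eq0 => /eqP ez.
rewrite /pm_val -addrA -opprD subr_le0 -normrX ez.
apply: le_trans (ler_normD _ _) _; apply: lerD.
  by rewrite normrM normr_nat normrX.
by apply: le_trans (ler_norm_sum _ _ _) _; apply: ler_sum => i _; rewrite normrX.
Qed.

Section ClosedField.

Variables (C : numClosedFieldType) (n m : nat).
Hypothesis m_gt0 : (0 < m)%N.

Lemma pm_root_norm_eq (z : C) :
  pm_val n m z = 0 -> pm_val n m `|z| = 0 -> z = `|z|.
Proof.
move=> /eqP; rewrite pm_val_eq0 => /eqP ez /eqP; rewrite pm_val_eq0 => /eqP enz.
have [->|z0] := eqVneq z 0; first by rewrite normr0.
pose c (i : 'I_n.+2) : C := if (i : nat) == n.+1 then m%:R else 1.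
have sum_c (x : C) :
    \sum_(i < n.+2) c i * x ^+ i = m%:R * x ^+ n.+1 + \sum_(i < n.+1) x ^+ i.
  rewrite big_ord_recr /= /c eqxx addrC; congr (_ + _).
  by apply: eq_bigr => i _; rewrite /= (ltn_eqF (ltn_ord i)) mul1r.
have [t _ c_arg] : {t : C | `|t| == 1
    & forall i, true -> c i * z ^+ i = `|c i * z ^+ i| * t}.
  apply: normC_sum_eq; rewrite sum_c -ez normrX enz -sum_c.
  by apply: eq_bigr => i _; rewrite normrM normrX ger0_norm // /c; case: ifP.
have t1 : t = 1.
  by have := c_arg ord0 isT; rewrite /c /= expr0 mulr1 normr1 mul1r.
have zn : z ^+ n = `|z ^+ n|.
  have := c_arg (inord n) isT; rewrite /c /= inordK // (ltn_eqF (ltnSn n)).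
  by rewrite mul1r t1 mulr1.
have zSn : z ^+ n.+1 = `|z ^+ n.+1|.
  have := c_arg ord_max isT; rewrite /c /= eqxx t1 mulr1 normrM normr_nat.
  by move/(mulfI _); apply; rewrite pnatr_eq0 -lt0n.
apply: (mulIf (expf_neq0 n z0)).
by rewrite -exprS zSn normrX exprS -normrX -zn.
Qed.

Lemma pm_root_norm_lt (rho z : C) : 0 < rho ->
  pm_val n m rho = 0 -> pm_val n m z = 0 -> z != rho -> `|z| < rho.
Proof.
move=> rho0 erho ez.
have [//|rho_lt_nz|nz_rho] := real_ltgtP (normr_real z) (gtr0_real rho0).
  have := pm_val_gt0_mono (n := n) (m := m) rho0 rho_lt_nz; rewrite erho lexx.
  by move=> /(_ isT) /lt_le_trans /(_ (pm_val_norm_le0 ez)); rewrite ltxx.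
have enz : pm_val n m `|z| = 0 by rewrite nz_rho.
by rewrite {1}(pm_root_norm_eq ez enz) nz_rho eqxx.
Qed.

End ClosedField.

Theorem mainTheorem1 (k m : nat) (hk : (2 <= k)%N) (hm : (0 < m)%N) :
  exists rho : algC,
    [/\ 0 < rho, root (pm k m) rho,
        (forall x : algC, 0 < x -> root (pm k m) x -> x = rho),
        m%:R < rho /\ rho < m.+1%:R
      & forall g : algC, root (pm k m) g -> g != rho -> `|g| < rho].
Proof.
case: k hk => [|[|n]] // _.
have [rho /andP[m_lt_rho rho_lt_Sm] erho] := pm_root_between n hm.
have rho0 : 0 < rho by apply: le_lt_trans m_lt_rho.
have rootE' (x : algC) : root (pm n.+2 m) x = (pm_val n m x == 0).
  by rewrite rootE (horner_pm_poly (R := algC)).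
exists rho; split => //.
- by rewrite rootE' erho.
- by move=> x x0; rewrite rootE' => /eqP ex; apply: pm_val_pos_root_unique ex erho.
- by move=> g; rewrite rootE' => /eqP eg; apply: (pm_root_norm_lt hm rho0 erho eg).
Qed.
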